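(* For every positive integer $n$, the average value of the Wiener index over $\mathcal{G}_n$ is $$W_{avr}(\mathcal{G}_n)=\frac{1}{|\mathcal{G}_n|}\sum_{G\in\mathcal{G}_n}W(G)=\frac13\left(25n^3+60n^2-4n\right).$$
   Context: The Wiener index is $W(G)=\sum_{\{u,v\}\subseteq V(G)}d_G(u,v)$, $d_G$ the shortest-path distance. A spiro hexagonal chain $G_n=H_0H_1\cdots H_{n-1}$ with $n$ hexagons is a connected graph whose blocks are hexagons (6-cycles) $H_0,\dots,H_{n-1}$, each hexagon having at most two cut-vertices, each cut-vertex shared by exactly two hexagons, and $H_{k-1},H_k$ sharing the cut-vertex $c_k$ ($1\le k\le n-1$). For $1\le i\le n-2$, the hexagon $H_i$ is labelled $O$, $M$ or $P$ according as the distance in $H_i$ between $c_i$ and $c_{i+1}$ is $1$, $2$ or $3$; the word $x_1x_2\cdots x_{n-2}$ over $\{O,M,P\}$ is the code of the chain (empty if $n\le2$). The code determines the chain up to isomorphism, and a code and its reverse describe the same chain. $\mathcal{G}_n$ denotes the set of all spiro hexagonal chains with $n$ hexagons, i.e. one chain for each class of codes of length $n-2$ under identification of a word with its reverse (so $|\mathcal{G}_n|=\frac12(3^{n-2}+3^{\lfloor (n-1)/2\rfloor})$ for $n\ge2$). *)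

From HB Require Import structures.
From mathcomp Require Import all_boot all_order all_algebra.
Set Implicit Arguments. Unset Strict Implicit. Unset Printing Implicit Defensive.
Import Order.TTheory GRing.Theory Num.Theory.

Definition walk_of_len (T : finType) (e : rel T) (k : nat) (u v : T) : bool :=
  [exists p : k.-tuple T, path e u p && (last u p == v)].

(* d_G(u,v): the least k such that a walk of length k from u to v exists
   (= shortest-path distance; graphs considered here are connected). *)
Definition dist (T : finType) (e : rel T) (u v : T) : nat :=
  find (fun k => walk_of_len e k u v) (iota 0 #|T|).

(* Wiener index of the graph with vertex set [V] and edge relation [e]:
   sum of distances over unordered pairs {u,v} of distinct vertices
   (each unordered pair counted once, via the order enum_rank u < enum_rank v). *)
Definition wiener (T : finType) (V : {pred T}) (e : rel T) : nat :=
  \sum_(u in V) \sum_(v in V | enum_rank u < enum_rank v) dist e u v.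

(* A code letter is an element of 'I_3:  0 = O, 1 = M, 2 = P.
   Letter i means the two cut-vertices of the hexagon are at distance i+1. *)
Definition spiro_code (n : nat) := (n.-2).-tuple 'I_3.

(* Hexagon H_k has vertices (k, j), j : 'I_6, forming the cycle
   (k,0)-(k,1)-...-(k,5)-(k,0).  Vertex (k,0) (k >= 1) is the cut vertex c_k
   shared with H_(k-1), where it is the vertex (k-1, exitpos (k-1)).
   For H_0 the position of c_1 is immaterial (hexagon symmetry); we take 3.
   For 1 <= k <= n-2, exitpos k = x_k + 1 is the distance between c_k and c_(k+1). *)
Definition exitpos (n : nat) (c : spiro_code n) (k : nat) : nat :=
  if k == 0 then 3 else (nth ord0 (val c) k.-1).+1.

Definition svert (n : nat) := ('I_n * 'I_6)%type.

Definition ord_pred_nat (n : nat) (k : 'I_n) : 'I_n :=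
  @Ordinal n k.-1 (leq_ltn_trans (leq_pred k) (ltn_ord k)).

Definition canon (n : nat) (c : spiro_code n) (x : svert n) : svert n :=
  if (0 < x.1) && (x.2 == ord0) then
    (ord_pred_nat x.1, inord (exitpos c (x.1).-1))
  else x.

Definition chain_vertex (n : nat) (c : spiro_code n) : {pred svert n} :=
  fun x => canon c x == x.

Definition chain_adj (n : nat) (c : spiro_code n) : rel (svert n) :=
  fun u v => [exists x : svert n,
    ((canon c x == u) && (canon c (x.1, ordS x.2) == v)) ||
    ((canon c x == v) && (canon c (x.1, ordS x.2) == u))].

Definition W_chain (n : nat) (c : spiro_code n) : nat :=
  wiener (chain_vertex c) (chain_adj c).

(* The set G_n: classes of codes of length n-2 under identification of a
   word with its reverse; one chain (a representative code) per class. *)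
Definition code_classes (n : nat) : {set {set spiro_code n}} :=
  [set [set c; [tuple of rev c]] | c : spiro_code n].

Definition default_code (n : nat) : spiro_code n := [tuple ord0 | _ < n.-2].

Definition class_rep (n : nat) (K : {set spiro_code n}) : spiro_code n :=
  odflt (default_code n) [pick c in K].

Definition W_avr (n : nat) : rat :=
  ((\sum_(K in code_classes n) W_chain (class_rep K))%:R / (#|code_classes n|)%:R)%R.

From mathcomp Require Import all_boot all_order all_algebra.
From mathcomp Require Import zify.
Set Implicit Arguments. Unset Strict Implicit. Unset Printing Implicit Defensive.

Import GRing.Theory Num.Theory.

(* Let g_k be the distance in the hexagon H_k between its two cut vertices.
   Distances in the chain add up along the cut vertices, which gives an explicit
   formula for them; summing it hexagon by hexagon yields
     W(G) = 45 n^2 - 18 n + 25 * \sum_k k (n-1-k) g_k.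
   Exchanging O and P replaces g_k by 4 - g_k on the inner hexagons; this is an
   involution on the classes of codes, so on average the sum is 2 * C(n,3). *)

Section WalkDistance.

Variables (T : finType) (e : rel T) (V : {pred T}) (D : T -> T -> nat).

Hypothesis D_refl : forall v, D v v = 0.
Hypothesis D_lipschitz : forall u w v, e u w -> D u v <= (D w v).+1.
Hypothesis D_eq0 : forall u v, u \in V -> v \in V -> D u v = 0 -> u = v.
Hypothesis D_descent : forall u v, u \in V -> v \in V -> 0 < D u v ->
  exists2 w, w \in V & e u w /\ D w v = (D u v).-1.

Lemma walk_of_len_ge k u v : walk_of_len e k u v -> D u v <= k.
Proof.
case/existsP=> [[s /= /eqP <-]] /andP[e_s /eqP <-].
elim: s u e_s => [|w s IHs] u /=; first by rewrite D_refl.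
case/andP=> e_uw /IHs le_w; exact: leq_trans (D_lipschitz _ e_uw) _.
Qed.

Lemma walk_of_len_D u v : u \in V -> v \in V -> walk_of_len e (D u v) u v.
Proof.
move=> + Vv; move Duv: (D u v) => d; elim: d u Duv => [|d IHd] u Duv Vu.
  by rewrite (D_eq0 Vu Vv Duv); apply/existsP; exists [tuple]; rewrite /=.
have [w Vw [e_uw Dwv]] := D_descent Vu Vv (ltac:(by rewrite Duv)).
case/existsP: (IHd w (ltac:(by rewrite Dwv Duv)) Vw) => p /andP[e_p last_p].
by apply/existsP; exists [tuple of w :: p]; rewrite /= e_uw e_p.
Qed.

Lemma dist_eq u v : u \in V -> v \in V -> D u v < #|T| -> dist e u v = D u v.
Proof.
move=> Vu Vv D_lt; rewrite /dist -(subnKC (ltnW D_lt)) iotaD find_cat.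
have -> : has (fun k => walk_of_len e k u v) (iota 0 (D u v)) = false.
  apply/hasPn => k; rewrite mem_iota => /andP[_ lt_k].
  by apply/negP => /walk_of_len_ge; rewrite leqNgt lt_k.
rewrite size_iota; case: (#|T| - D u v) (ltac:(lia) : 0 < #|T| - D u v) => // m _.
by rewrite /= walk_of_len_D // addn0.
Qed.

End WalkDistance.

Lemma double_sum_rank_lt (T : finType) (V : {pred T}) (f : T -> T -> nat) :
  (forall u v, f u v = f v u) -> (forall u, f u u = 0) ->
  2 * (\sum_(u in V) \sum_(v in V | enum_rank u < enum_rank v) f u v) =
  \sum_(u in V) \sum_(v in V) f u v.
Proof.
move=> f_sym f_refl.
have split_rank u : \sum_(v in V) f u v =
   \sum_(v in V | enum_rank u < enum_rank v) f u v +
   \sum_(v in V | enum_rank v < enum_rank u) f u v.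
  rewrite (bigID (fun v => enum_rank u < enum_rank v)) /=; congr addn.
  rewrite big_mkcond [RHS]big_mkcond; apply: eq_bigr => v _.
  case: (v \in V) => //=; case: (ltngtP (enum_rank u) (enum_rank v)) => // eq_uv.
  by rewrite -(enum_rank_inj (val_inj eq_uv)) f_refl.
rewrite (eq_bigr _ (fun u _ => split_rank u)) big_split /= mul2n -addnn; congr addn.
rewrite (exchange_big_dep (mem V)) => [|u v _ /andP[]//].
apply: eq_bigr => u Vu; apply: eq_big => [v|v _]; last exact: f_sym.
by have -> : u \in V by [].
Qed.

Definition hexd (i j : 'I_6) : nat :=
  let d := if i <= j then j - i else i - j in minn d (6 - d).

Ltac case_I6 := case=> [[|[|[|[|[|[|//]]]]]] ?].

Lemma hexd_sym i j : hexd i j = hexd j i.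
Proof. by move: i j; do 2 case_I6. Qed.

Lemma hexdii i : hexd i i = 0.
Proof. by move: i; case_I6. Qed.

Lemma hexd_eq0 i j : (hexd i j == 0) = (i == j).
Proof. by move: i j; do 2 case_I6. Qed.

Lemma hexd_le3 i j : hexd i j <= 3.
Proof. by move: i j; do 2 case_I6. Qed.

Lemma hexdS_le i j : hexd (ordS i) j <= (hexd i j).+1.
Proof. by move: i j; do 2 case_I6. Qed.

Lemma hexd_leS i j : hexd i j <= (hexd (ordS i) j).+1.
Proof. by move: i j; do 2 case_I6. Qed.

Lemma hexd_step i j : i != j ->
  (hexd (ordS i) j == (hexd i j).-1) || (hexd (ord_pred i) j == (hexd i j).-1).
Proof. by move: i j; do 2 case_I6. Qed.

Lemma hexd0 (j : 'I_6) : j <= 3 -> hexd ord0 j = j.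
Proof. by move: j; case_I6. Qed.

Lemma hexd_gt0 i j : (0 < hexd i j) = (i != j).
Proof. by rewrite lt0n hexd_eq0. Qed.

Section ChainDistance.

(* [exit a] is the position in hexagon [a] of the cut vertex shared with hexagon
   [a.+1]; position [0] of hexagon [a.+1] is that same vertex. *)
Variable exit : nat -> 'I_6.

Definition link k := hexd ord0 (exit k).

Definition spine a b := \sum_(a <= k < b) link k.

Definition cdist a (i : 'I_6) b (j : 'I_6) : nat :=
  if a == b then hexd i j
  else if a < b then hexd i (exit a) + spine a.+1 b + hexd ord0 j
  else hexd j (exit b) + spine b.+1 a + hexd ord0 i.

Lemma spinenn a : spine a a = 0.
Proof. by rewrite /spine big_geq. Qed.

Lemma spineS a b : a < b -> spine a b = link a + spine a.+1 b.
Proof. by move=> lt_ab; rewrite /spine big_ltn. Qed.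

Lemma spineSr a b : a <= b -> spine a b.+1 = spine a b + link b.
Proof. by move=> le_ab; rewrite /spine big_nat_recr. Qed.

Lemma spine_le a b : spine a b <= 3 * (b - a).
Proof.
rewrite /spine (@leq_trans (\sum_(a <= k < b) 3)) ?leq_sum // => [k _|].
  exact: hexd_le3.
by rewrite sum_nat_const_nat mulnC.
Qed.

Lemma cdist_eq a i j : cdist a i a j = hexd i j.
Proof. by rewrite /cdist eqxx. Qed.

Lemma cdist_lt a i b j :
  a < b -> cdist a i b j = hexd i (exit a) + spine a.+1 b + hexd ord0 j.
Proof. by move=> lt_ab; rewrite /cdist (ltn_eqF lt_ab) lt_ab. Qed.

Lemma cdist_gt a i b j :
  b < a -> cdist a i b j = hexd j (exit b) + spine b.+1 a + hexd ord0 i.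
Proof. by move=> lt_ba; rewrite /cdist (gtn_eqF lt_ba) ltnNge (ltnW lt_ba). Qed.

Lemma cdist_sym a i b j : cdist a i b j = cdist b j a i.
Proof.
case: (ltngtP a b) => [lt_ab|lt_ba|->]; last by rewrite !cdist_eq hexd_sym.
  by rewrite cdist_lt // cdist_gt.
by rewrite cdist_gt // cdist_lt.
Qed.

Lemma cdist_cut a b j : cdist a.+1 ord0 b j = cdist a (exit a) b j.
Proof.
case: (ltngtP a.+1 b) => [lt_ab|lt_ba|<-].
- rewrite cdist_lt // cdist_lt 1?ltnW // hexdii (spineS lt_ab) /link; lia.
- case: (ltngtP a b) => [|lt_ba'|<-]; first lia.
    by rewrite !cdist_gt // spineSr // /link hexdii; lia.
  by rewrite cdist_gt // cdist_eq spinenn hexdii hexd_sym; lia.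
- by rewrite cdist_eq cdist_lt // hexdii spinenn.
Qed.

Lemma cdistS_le a i b j : cdist a (ordS i) b j <= (cdist a i b j).+1.
Proof.
case: (ltngtP a b) => [lt_ab|lt_ba|<-]; last by rewrite !cdist_eq hexdS_le.
  rewrite !cdist_lt //; have := hexdS_le i (exit a); lia.
rewrite !cdist_gt // !(hexd_sym ord0); have := hexdS_le i ord0; lia.
Qed.

Lemma cdist_leS a i b j : cdist a i b j <= (cdist a (ordS i) b j).+1.
Proof.
case: (ltngtP a b) => [lt_ab|lt_ba|<-]; last by rewrite !cdist_eq hexd_leS.
  rewrite !cdist_lt //; have := hexd_leS i (exit a); lia.
rewrite !cdist_gt // !(hexd_sym ord0); have := hexd_leS i ord0; lia.
Qed.

Lemma cdist_le a i b j : cdist a i b j <= 3 * (maxn a b - minn a b) + 3.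
Proof.
have := hexd_le3; have := spine_le.
case: (ltngtP a b) => [lt_ab|lt_ba|<-] le_spine le3.
- rewrite cdist_lt //; have := le3 i (exit a); have := le3 ord0 j.
  have := le_spine a.+1 b; lia.
- rewrite cdist_gt //; have := le3 j (exit b); have := le3 ord0 i.
  have := le_spine b.+1 a; lia.
- rewrite cdist_eq; have := le3 i j; lia.
Qed.

End ChainDistance.

Section ChainGraph.

Variables (n : nat) (c : spiro_code n).

Definition exit_ord k : 'I_6 := inord (exitpos c k).

Definition chain_dist (x y : svert n) := cdist exit_ord x.1 x.2 y.1 y.2.

Lemma exitpos_gt0 k : 0 < exitpos c k.
Proof. by rewrite /exitpos; case: ifP. Qed.

Lemma exitpos_le3 k : exitpos c k <= 3.
Proof. by rewrite /exitpos; case: ifP => // _; exact: ltn_ord. Qed.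

Lemma exit_ordE k : exit_ord k = exitpos c k :> nat.
Proof. by rewrite inordK // ltnS (leq_trans (exitpos_le3 k)). Qed.

Lemma link_exit_ord k : link exit_ord k = exitpos c k.
Proof. by rewrite /link hexd0 exit_ordE ?exitpos_le3. Qed.

Lemma chain_vertexP x : (x \in chain_vertex c) = (x.1 == 0 :> nat) || (x.2 != ord0).
Proof.
rewrite unfold_in /chain_vertex /canon; case: ifP => [/andP[a_gt0 ->]|].
  rewrite orbF eqn0Ngt a_gt0; apply/eqP => /(congr1 (fun z => val z.1)) /=; lia.
by rewrite eqxx => /negbT; rewrite negb_and -eqn0Ngt.
Qed.

Lemma canon_vertex x : canon c x \in chain_vertex c.
Proof.
rewrite chain_vertexP /canon; case: ifP => [_|/negbT]; last by rewrite negb_and -eqn0Ngt.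
apply/orP; right; rewrite -(inj_eq val_inj) /= inordK; have := exitpos_gt0 (x.1).-1.
  by rewrite lt0n.
by rewrite ltnS (leq_trans (exitpos_le3 _)).
Qed.

Lemma chain_dist_canon x y : chain_dist (canon c x) y = chain_dist x y.
Proof.
rewrite /canon; case: ifP => // /andP[].
by case: x => [[[|a] ?] i] //= _ /eqP ->; rewrite /chain_dist /= cdist_cut.
Qed.

Lemma chain_dist_sym x y : chain_dist x y = chain_dist y x.
Proof. exact: cdist_sym. Qed.

Lemma chain_distxx x : chain_dist x x = 0.
Proof. by rewrite /chain_dist cdist_eq hexdii. Qed.

Lemma chain_dist_adj u w v : chain_adj c u w -> chain_dist u v <= (chain_dist w v).+1.
Proof.
case/existsP=> x /orP[/andP[/eqP <- /eqP <-] | /andP[/eqP <- /eqP <-]];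
  rewrite !chain_dist_canon; [exact: cdist_leS | exact: cdistS_le].
Qed.

Lemma chain_adj_toward (x : svert n) t : x.2 != t ->
  exists2 y : svert n, y.1 = x.1 &
    hexd y.2 t = (hexd x.2 t).-1 /\ chain_adj c (canon c x) (canon c y).
Proof.
case: x => a i /= ne_it; case/orP: (hexd_step ne_it) => /eqP closer.
  exists (a, ordS i) => //; split=> //; apply/existsP; exists (a, i).
  by rewrite !eqxx.
exists (a, ord_pred i) => //; split=> //; apply/existsP; exists (a, ord_pred i).
by rewrite /= ord_predK !eqxx orbT.
Qed.

Lemma chain_dist_toward (x u v : svert n) t R : canon c x = u -> x.2 != t ->
  (forall i, cdist exit_ord x.1 i v.1 v.2 = hexd i t + R) ->
  exists2 w, w \in chain_vertex c & chain_adj c u w /\ chain_dist w v = (chain_dist u v).-1.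
Proof.
move=> <- ne_t Dx; have [y y1 [closer adj]] := chain_adj_toward ne_t.
exists (canon c y); first exact: canon_vertex.
split=> //; rewrite !chain_dist_canon /chain_dist y1 !Dx closer.
by move: ne_t; rewrite -hexd_gt0; case: (hexd x.2 t).
Qed.

(* Step inside the hexagon of u towards the vertex through which every shortest
   path to v leaves it; if u is that cut vertex itself, step inside the next
   hexagon instead. *)
Lemma chain_dist_descent u v : u \in chain_vertex c -> v \in chain_vertex c ->
  0 < chain_dist u v ->
  exists2 w, w \in chain_vertex c &
    chain_adj c u w /\ chain_dist w v = (chain_dist u v).-1.
Proof.
move=> Vu Vv; have u_canon : canon c u = u by apply/eqP; rewrite -unfold_in.
move: u v u_canon Vu Vv => [a i] [b j] u_canon.
rewrite !chain_vertexP /= => Vu Vv Dpos.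
case: (ltngtP a b) => [lt_ab|lt_ba|eq_ab].
- have [eq_i|ne_i] := eqVneq i (exit_ord a); last first.
    apply: (chain_dist_toward (R := spine exit_ord a.+1 b + hexd ord0 j) u_canon ne_i).
    by move=> i' /=; rewrite cdist_lt // addnA.
  have lt_a1 : a.+1 < n by apply: leq_ltn_trans lt_ab (ltn_ord b).
  have cut_u : canon c (Ordinal lt_a1, ord0) = (a, i).
    by rewrite /canon /= eq_i; congr pair; exact: val_inj.
  case: (ltngtP a.+1 b) => [lt_a1b|lt_ba1|eq_a1b]; [|lia|].
  + apply: (chain_dist_toward (t := exit_ord a.+1)
             (R := spine exit_ord a.+2 b + hexd ord0 j) cut_u).
      by rewrite eq_sym -(inj_eq val_inj) /= exit_ordE -lt0n exitpos_gt0.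
    by move=> i' /=; rewrite cdist_lt // addnA.
  + apply: (chain_dist_toward (t := j) (R := 0) cut_u).
      by move: Vv; rewrite -eq_a1b /= eq_sym.
    by move=> i' /=; rewrite eq_a1b cdist_eq addn0.
- apply: (chain_dist_toward (t := ord0)
           (R := hexd j (exit_ord b) + spine exit_ord b.+1 a) u_canon) => /=.
    by move: Vu; have -> : (a == 0 :> nat) = false by apply/eqP; lia.
  by move=> i'; rewrite cdist_gt // (hexd_sym i') addnC.
- apply: (chain_dist_toward (t := j) (R := 0) u_canon) => /=.
    by apply: contraTneq Dpos => ->; rewrite /chain_dist /= eq_ab cdist_eq hexdii.
  by move=> i'; rewrite eq_ab cdist_eq addn0.
Qed.

Lemma chain_dist_eq0 u v : u \in chain_vertex c -> v \in chain_vertex c ->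
  chain_dist u v = 0 -> u = v.
Proof.
case: u v => [a i] [b j]; rewrite !chain_vertexP /chain_dist /= => Vu Vv.
case: (ltngtP a b) => [lt_ab|lt_ba|eq_ab].
- rewrite cdist_lt // => /eqP; rewrite !addn_eq0 => /andP[_]; rewrite hexd_eq0 => /eqP j0.
  by move: Vv; rewrite -[j]j0 eqxx orbF; lia.
- rewrite cdist_gt // => /eqP; rewrite !addn_eq0 => /andP[_]; rewrite hexd_eq0 => /eqP i0.
  by move: Vu; rewrite -[i]i0 eqxx orbF; lia.
- by rewrite eq_ab cdist_eq => /eqP; rewrite hexd_eq0 => /eqP ->; congr pair; exact: val_inj.
Qed.

Lemma chain_dist_lt_card u v : chain_dist u v < #|{: svert n}|.
Proof.
rewrite card_prod !card_ord; apply: leq_ltn_trans (cdist_le _ _ _ _ _) _.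
have := ltn_ord u.1; have := ltn_ord v.1; lia.
Qed.

Lemma dist_chain u v : u \in chain_vertex c -> v \in chain_vertex c ->
  dist (chain_adj c) u v = chain_dist u v.
Proof.
move=> Vu Vv; apply: dist_eq Vu Vv (chain_dist_lt_card u v).
- exact: chain_distxx.
- exact: chain_dist_adj.
- exact: chain_dist_eq0.
- exact: chain_dist_descent.
Qed.

Lemma W_chain_double :
  2 * W_chain c = \sum_(u in chain_vertex c) \sum_(v in chain_vertex c) chain_dist u v.
Proof.
rewrite /W_chain /wiener -double_sum_rank_lt; last 2 first.
- exact: chain_dist_sym.
- exact: chain_distxx.
congr (2 * _); apply: eq_bigr => u Vu; apply: eq_bigr => v /andP[Vv _].
exact: dist_chain.
Qed.

End ChainGraph.

Section BlockSums.

Variable exit : nat -> 'I_6.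

Definition block_mem a (i : 'I_6) := (a == 0) || (i != ord0).
Definition block_size a := if a == 0 then 6 else 5.

Definition block_dist a b :=
  \sum_(i < 6 | block_mem a i) \sum_(j < 6 | block_mem b j) cdist exit a i b j.
Definition total_dist m := \sum_(0 <= a < m) \sum_(0 <= b < m) block_dist a b.

Definition exit_dist a := \sum_(i < 6 | block_mem a i) hexd i (exit a).
Definition inner_links m := \sum_(0 <= a < m) (if a == 0 then 0 else link exit a).
Definition link_weight m := \sum_(0 <= k < m) k * link exit k.
Definition link_moment m := \sum_(0 <= k < m) k * (m.-1 - k) * link exit k.

Ltac expand_I6 := repeat rewrite ?big_mkcond !big_ord_recl !big_ord0 /=.

Lemma sum_block_const a k : \sum_(i < 6 | block_mem a i) k = k * block_size a.
Proof. by rewrite /block_mem /block_size; case: (a == 0); expand_I6; lia. Qed.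

Lemma sum_block_hexd0 b : \sum_(j < 6 | block_mem b j) hexd ord0 j = 9.
Proof. by rewrite /block_mem; case: (b == 0); expand_I6. Qed.

Lemma exit_dist_link a : exit_dist a + (if a == 0 then 0 else link exit a) = 9.
Proof.
rewrite /exit_dist /link /block_mem; move: (exit a) => t.
by case: (a == 0); move: t; case_I6; expand_I6.
Qed.

Lemma block_dist_diag a : block_dist a a = if a == 0 then 54 else 36.
Proof.
rewrite /block_dist; under eq_bigr do under eq_bigr do rewrite cdist_eq.
by rewrite /block_mem; case: (a == 0); expand_I6.
Qed.

Lemma block_dist_sym a b : block_dist a b = block_dist b a.
Proof.
rewrite /block_dist exchange_big; apply: eq_bigr => j _; apply: eq_bigr => i _.
exact: cdist_sym.
Qed.

Lemma block_dist_lt a b : a < b ->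
  block_dist a b = 5 * exit_dist a + 5 * (block_size a * spine exit a.+1 b) + 9 * block_size a.
Proof.
move=> lt_ab; rewrite /block_dist; under eq_bigr do under eq_bigr do rewrite cdist_lt //.
under eq_bigr do rewrite !big_split /= !sum_block_const sum_block_hexd0.
have -> : block_size b = 5 by rewrite /block_size (gtn_eqF (leq_ltn_trans _ lt_ab)).
rewrite !big_split /= -big_distrl /= -/(exit_dist a) !sum_block_const; lia.
Qed.

Lemma sum_block_size m : \sum_(0 <= a < m) block_size a = 5 * m + (0 < m).
Proof.
elim: m => [|m IHm]; first by rewrite big_geq.
by rewrite big_nat_recr //= IHm /block_size; case: m {IHm} => //= m; lia.
Qed.

Lemma sum_exit_dist m : \sum_(0 <= a < m) exit_dist a + inner_links m = 9 * m.
Proof.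
rewrite /inner_links -big_split /= (eq_bigr (fun _ => 9)) => [|a _]; last exact: exit_dist_link.
by rewrite sum_nat_const_nat subn0 mulnC.
Qed.

Lemma sum_block_spine m :
  \sum_(0 <= a < m) block_size a * spine exit a.+1 m = 5 * link_weight m + inner_links m.
Proof.
elim: m => [|m IHm]; first by rewrite /link_weight /inner_links !big_geq.
rewrite big_nat_recr //= spinenn muln0 addn0.
under eq_big_nat => a /andP[_ lt_am] do rewrite spineSr // mulnDr.
rewrite big_split /= IHm -big_distrl /= sum_block_size.
rewrite /link_weight /inner_links !big_nat_recr //=.
by case: m {IHm} => [|m] /=; [rewrite !big_geq | lia].
Qed.

Lemma sum_block_dist_last m :
  \sum_(0 <= a < m) block_dist a m = 90 * m + 25 * link_weight m + 9 * (0 < m).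
Proof.
under eq_big_nat => a /andP[_ lt_am] do rewrite block_dist_lt //.
rewrite !big_split /= !big1_eq sum_block_spine sum_block_size.
have := sum_exit_dist m; lia.
Qed.

Lemma total_distS m :
  total_dist m.+1 = total_dist m + 2 * \sum_(0 <= a < m) block_dist a m + block_dist m m.
Proof.
rewrite /total_dist; under eq_big_nat => a _ do rewrite big_nat_recr //.
rewrite big_split /= !(big_nat_recr m) //=.
under [\sum_(0 <= b < m) block_dist m b]eq_big_nat => b _ do rewrite block_dist_sym.
lia.
Qed.

Lemma link_momentS m : link_moment m.+1 = link_moment m + link_weight m.
Proof.
rewrite /link_moment /link_weight big_nat_recr //= subnn muln0 mul0n addn0 -big_split /=.
apply: eq_big_nat => k /andP[_ lt_km].
have -> : m - k = (m.-1 - k).+1 by lia.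
by rewrite mulnSr mulnDl.
Qed.

Lemma total_dist_closed m : total_dist m + 36 * m = 90 * (m * m) + 50 * link_moment m.
Proof.
elim: m => [|m IHm]; first by rewrite /total_dist /link_moment !big_geq.
rewrite total_distS sum_block_dist_last block_dist_diag link_momentS.
case: m IHm => [|m] IHm /=; first by rewrite /total_dist /link_weight /link_moment !big_geq.
nia.
Qed.

End BlockSums.

Lemma sum_mul_rev_sub m : \sum_(0 <= k < m) k * (m.-1 - k) = 'C(m, 3).
Proof.
elim: m => [|m IHm]; first by rewrite big_geq.
rewrite big_nat_recr //= subnn muln0 addn0 binS -IHm -bin2_sum -big_split /=.
apply: eq_big_nat => k /andP[_ lt_km].
have -> : m - k = (m.-1 - k).+1 by lia.
by rewrite mulnSr.
Qed.

Lemma bin3_closed m : 6 * 'C(m, 3) + 3 * (m * m) = m * m * m + 2 * m.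
Proof.
case: m => [|[|[|m]]] //; rewrite mulnC bin_ffact !ffactnS ffactn0 /=; nia.
Qed.

Section ChainWiener.

Variables (n : nat) (c : spiro_code n).

Definition code_moment := \sum_(0 <= k < n) k * (n.-1 - k) * exitpos c k.

Lemma sum_chain_vertex (F : svert n -> nat) :
  \sum_(u in chain_vertex c) F u = \sum_(a < n) \sum_(i < 6 | block_mem a i) F (a, i).
Proof.
by rewrite pair_big_dep /=; apply: eq_big => [[a i]|[a i] _] //=; rewrite chain_vertexP.
Qed.

Lemma sum_chain_dist :
  \sum_(u in chain_vertex c) \sum_(v in chain_vertex c) chain_dist c u v =
  total_dist (exit_ord c) n.
Proof.
rewrite sum_chain_vertex /total_dist big_mkord; apply: eq_bigr => a _.
rewrite big_mkord; under eq_bigr do rewrite sum_chain_vertex.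
by rewrite exchange_big.
Qed.

Lemma W_chain_formula : W_chain c + 18 * n = 45 * (n * n) + 25 * code_moment.
Proof.
have := total_dist_closed (exit_ord c) n; rewrite -sum_chain_dist -W_chain_double.
suff -> : link_moment (exit_ord c) n = code_moment by lia.
by apply: eq_bigr => k _; rewrite link_exit_ord.
Qed.

End ChainWiener.

Definition flip_code n (c : spiro_code n) : spiro_code n := [tuple of map (@rev_ord 3) c].

Section CodeSymmetries.

Variables (n : nat) (c : spiro_code n).

Lemma exitpos_flip k : 0 < k < n.-1 -> exitpos c k + exitpos (flip_code c) k = 4.
Proof.
case/andP=> k_gt0 lt_k; rewrite /exitpos (gtn_eqF k_gt0) /= (nth_map ord0).
  by case: (nth ord0 c k.-1) => x lt_x /=; lia.
by rewrite size_tuple; lia.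
Qed.

Lemma exitpos_rev k : 0 < k < n.-1 -> exitpos [tuple of rev c] (n.-1 - k) = exitpos c k.
Proof.
case/andP=> k_gt0 lt_k; rewrite /exitpos (gtn_eqF k_gt0) (_ : (_ == 0) = false); last first.
  by apply/eqP; lia.
rewrite /= nth_rev size_tuple; last lia.
by have -> : n.-2 - (n.-1 - k).-1.+1 = k.-1 by lia.
Qed.

Lemma code_moment_flip : code_moment c + code_moment (flip_code c) = 4 * 'C(n, 3).
Proof.
rewrite /code_moment -sum_mul_rev_sub big_distrr -big_split /=.
apply: eq_big_nat => k /andP[_ lt_kn].
case: (posnP k) => [->|k_gt0]; first by rewrite !mul0n.
case: (leqP n.-1 k) => [le_k|lt_k]; first by rewrite (_ : n.-1 - k = 0) ?muln0 ?mul0n //; lia.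
by rewrite -mulnDr exitpos_flip ?k_gt0 // mulnC.
Qed.

Lemma code_moment_rev : code_moment [tuple of rev c] = code_moment c.
Proof.
rewrite /code_moment big_nat_rev /=; apply: eq_big_nat => k /andP[_ lt_kn].
rewrite add0n (_ : n - k.+1 = n.-1 - k); last lia.
case: (posnP k) => [->|k_gt0]; first by rewrite subn0 subnn muln0 !mul0n.
case: (leqP n.-1 k) => [le_k|lt_k]; first by rewrite (_ : n.-1 - k = 0) ?muln0 ?mul0n //; lia.
rewrite exitpos_rev; last by apply/andP; split; lia.
by rewrite (_ : n.-1 - (n.-1 - k) = k) 1?[_ * k]mulnC //; lia.
Qed.

End CodeSymmetries.

Lemma W_chain_rev n (c : spiro_code n) : W_chain [tuple of rev c] = W_chain c.
Proof.
have := W_chain_formula c; have := W_chain_formula [tuple of rev c].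
rewrite code_moment_rev; lia.
Qed.

Definition code_class n (c : spiro_code n) : {set spiro_code n} := [set c; [tuple of rev c]].

Lemma W_chain_class_rep n (c : spiro_code n) : W_chain (class_rep (code_class c)) = W_chain c.
Proof.
rewrite /class_rep; case: pickP => [y|/(_ c)]; last by rewrite !inE eqxx.
by rewrite !inE => /orP[] /eqP ->; rewrite ?W_chain_rev.
Qed.

Lemma flip_codeK n : involutive (@flip_code n).
Proof.
by move=> c; apply: val_inj; rewrite /= -map_comp (eq_map (@rev_ordK 3)) map_id.
Qed.

Lemma flip_code_class n (c : spiro_code n) :
  (@flip_code n) @: code_class c = code_class (flip_code c).
Proof.
rewrite imsetU1 imset_set1; congr (_ |: [set _]).
by apply: val_inj; rewrite /= map_rev.
Qed.

Lemma W_chain_flip n (c : spiro_code n) :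
  3 * (W_chain c + W_chain (flip_code c)) = 2 * (25 * n ^ 3 + 60 * n ^ 2 - 4 * n).
Proof.
have := W_chain_formula c; have := W_chain_formula (flip_code c).
have := code_moment_flip c; have := bin3_closed n.
have -> : n ^ 3 = n * n * n by rewrite !expnS expn0 muln1 mulnA.
have -> : n ^ 2 = n * n by rewrite !expnS expn0 muln1.
have : n <= n * n by nia.
lia.
Qed.

Section Average.

Variable n : nat.

Definition flip_class (K : {set spiro_code n}) := [set flip_code c | c in K].

Lemma flip_class_in K : K \in code_classes n -> flip_class K \in code_classes n.
Proof. by case/imsetP=> c _ ->; rewrite /flip_class flip_code_class imset_f. Qed.

Lemma flip_classK : involutive flip_class.
Proof. by move=> K; rewrite /flip_class -imset_comp (eq_imset _ (@flip_codeK n)) imset_id. Qed.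

Lemma W_chain_class_pair K : K \in code_classes n ->
  3 * (W_chain (class_rep K) + W_chain (class_rep (flip_class K))) =
  2 * (25 * n ^ 3 + 60 * n ^ 2 - 4 * n).
Proof.
by case/imsetP=> c _ ->; rewrite /flip_class flip_code_class !W_chain_class_rep W_chain_flip.
Qed.

Lemma sum_W_chain_classes :
  3 * \sum_(K in code_classes n) W_chain (class_rep K) =
  (25 * n ^ 3 + 60 * n ^ 2 - 4 * n) * #|code_classes n|.
Proof.
set S := \sum_(K in _) _.
have S_flip : S = \sum_(K in code_classes n) W_chain (class_rep (flip_class K)).
  rewrite /S (reindex_inj (can_inj flip_classK)); apply: eq_bigl => K /=.
  by apply/idP/idP => [/flip_class_in|/flip_class_in //]; rewrite flip_classK.
have : 2 * (3 * S) = \sum_(K in code_classes n) 2 * (25 * n ^ 3 + 60 * n ^ 2 - 4 * n).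
  rewrite mulnCA mul2n -addnn {2}S_flip -big_split big_distrr /=.
  by apply: eq_bigr => K /W_chain_class_pair.
rewrite sum_nat_const; lia.
Qed.

End Average.

Theorem theorem5p2 (n : nat) (hn : 0 < n) :
  W_avr n = ((25 * n ^ 3 + 60 * n ^ 2 - 4 * n)%:R / 3%:R)%R.
Proof.
have classes_gt0 : 0 < #|code_classes n|.
  by apply/card_gt0P; exists (code_class (default_code n)); exact: imset_f.
rewrite /W_avr; apply/eqP; rewrite eqr_div ?pnatr_eq0 -?lt0n //.
by rewrite -!natrM mulnC sum_W_chain_classes.
Qed.
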